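(* Let $G$ be a simple graph that is either a tree, or is connected and contains exactly one cycle $C$, where $C$ is not a 3-cycle. Form $G'$ from $G$ by adding a new vertex $v$ adjacent to at most four vertices of $G$, at least one of which lies on $C$ if $C$ exists. Then $G'$ has a near-bipartite coloring $I,F$ with $I\subseteq N_{G'}(v)$.
   Context: A near-bipartite coloring of a graph is a partition of its vertex set into $I,F$ with $I$ independent and the subgraph induced by $F$ a forest. *)

(* Finite simple graphs: symmetric irreflexive e : rel T on a finType T. *)
From mathcomp Require Import all_boot.
Set Implicit Arguments. Unset Strict Implicit. Unset Printing Implicit Defensive.

Section Graphs.
Variable T : finType.
Implicit Types (e : rel T) (S I F : {set T}) (c : seq T).

Definition induced e S : rel T := fun x y => [&& x \in S, y \in S & e x y].

Definition is_cycle_in e S c : bool :=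
  [&& 2 < size c, ucycleb e c & all (fun x => x \in S) c].

Definition forest_on e S : Prop := forall c, ~~ is_cycle_in e S c.

Definition connected_on e S : Prop :=
  S != set0 /\ forall x y, x \in S -> y \in S -> connect (induced e S) x y.

Definition tree_on e S : Prop := connected_on e S /\ forest_on e S.

Definition cycle_edge c (x y : T) : bool :=
  ((x \in c) && (y == next c x)) || ((y \in c) && (x == next c y)).

(* c is the unique cycle of the subgraph induced by S (cycles are compared as
   subgraphs, i.e. by their edge sets) *)
Definition unique_cycle_on e S c : Prop :=
  is_cycle_in e S c /\ forall c', is_cycle_in e S c' -> cycle_edge c' =2 cycle_edge c.

Definition independent e I : Prop := forall x y, x \in I -> y \in I -> ~~ e x y.

Definition near_bipartite_coloring e I F : Prop :=
  [disjoint I & F] /\ I :|: F = setT /\ independent e I /\ forest_on e F.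

End Graphs.

From mathcomp Require Import all_boot.
Set Implicit Arguments. Unset Strict Implicit. Unset Printing Implicit Defensive.

(* Let S = V(G') - v and N = N(v).  For an independent I included in N, the
   complement of I induces a forest as soon as G[S - I] is acyclic and no two
   vertices of N - I are linked in G[S - I]: a cycle through v would yield such
   a path.  If G has its cycle C, G[S - I] is acyclic once I meets C; a tree is
   handled by the same argument with C := V(G).
   If N - x is independent for some x, take I = N - x, or, when x is the only
   neighbour of v on C, I = {x} together with the non-neighbours of x in N: a
   path between two remaining neighbours closes a cycle through x and one of
   them, which would then lie on C.
   Otherwise, since G[N] has no triangle (C is not a triangle), N consists of
   four vertices spanned by two disjoint edges ab and cd, and one of the pairs
   {a,c}, {a,d}, {b,c}, {b,d} works: if two pairs sharing a vertex both fail,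
   the two witnessing paths close a cycle through the opposite edge that avoids
   the shared vertex, which tells which of a, b, c, d lie on C. *)

Section InducedCycles.
Variables (T : finType) (e : rel T).
Hypotheses (e_sym : symmetric e) (e_irr : irreflexive e).
Implicit Types (P Q X Y : {set T}) (p : seq T).

Lemma edge_neq x y : e x y -> x != y.
Proof. by apply: contraTneq => ->; rewrite e_irr. Qed.

Lemma induced_sym P : symmetric (induced e P).
Proof. by move=> x y; rewrite /induced e_sym andbCA. Qed.

Lemma induced_connect_sym P : connect_sym (induced e P).
Proof. exact/sym_connect_sym/induced_sym. Qed.

Lemma connect_induced_sub P Q x y : P \subset Q ->
  connect (induced e P) x y -> connect (induced e Q) x y.
Proof.
move=> /subsetP PQ; apply: connect_sub => {}x {}y /and3P[xP yP exy].
by apply: connect1; rewrite /induced (PQ _ xP) (PQ _ yP).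
Qed.

Lemma path_induced P x p : path e x p -> all [in P] (x :: p) -> path (induced e P) x p.
Proof.
elim: p x => //= y p IH x /andP[exy ep] /and3P[xP yP allP].
by rewrite /induced xP yP exy IH //= yP.
Qed.

Lemma induced_path_all P x p : path (induced e P) x p -> all [in P] p.
Proof. by elim: p x => //= y p IH x /andP[/and3P[_ -> _] /IH]. Qed.

Lemma is_cycle_in_sub P Q (c : seq T) :
  P \subset Q -> is_cycle_in e P c -> is_cycle_in e Q c.
Proof.
move=> /subsetP PQ /and3P[size_c ucycle_c /allP cP].
by rewrite /is_cycle_in size_c ucycle_c; apply/allP => x /cP /PQ.
Qed.

Lemma triangle_is_cycle P x y z : x \in P -> y \in P -> z \in P ->
  e x y -> e y z -> e x z -> is_cycle_in e P [:: x; y; z].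
Proof.
move=> xP yP zP exy eyz exz.
rewrite /is_cycle_in /ucycleb /= exy eyz (e_sym z) exz xP yP zP !inE !negb_or.
by rewrite (edge_neq exy) (edge_neq exz) (edge_neq eyz).
Qed.

Lemma cycle_of_detour P a b y : e a b ->
  connect (induced e (P :\ b)) a y -> connect (induced e (P :\ a)) y b ->
  exists2 c, is_cycle_in e P c & (a \in c) && (b \in c).
Proof.
move=> eab ay yb.
(* forbidding the step from a to b, a shortest a-b path has length at least 2 *)
pose R x z := induced e P x z && ~~ ((x == a) && (z == b)).
have R_P : subrel R (induced e P) by move=> x z /andP[].
have R_e : subrel R e by move=> x z /R_P /and3P[].
have avoid w : w \in [set a; b] -> subrel (connect (induced e (P :\ w))) (connect R).
  move=> /set2P wab; apply: connect_sub => x z; rewrite /induced !inE.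
  move=> /and3P[/andP[xw xP] /andP[zw zP] exz]; apply: connect1.
  rewrite /R /induced xP zP exz.
  by case: wab xw zw => -> xw zw; rewrite ?(negbTE xw) ?(negbTE zw) ?andbF.
have : connect R a b.
  by apply: connect_trans (avoid b _ _ _ ay) (avoid a _ _ _ yb); rewrite !inE eqxx ?orbT.
case/connectP => p Rp lastp; case: (shortenP Rp) lastp => {Rp}p Rp uniqp _ lastp.
exists (a :: p); last by rewrite lastp mem_head mem_last.
rewrite /is_cycle_in /ucycleb uniqp /= rcons_path (sub_path R_e Rp) -lastp e_sym eab.
case: p Rp uniqp lastp => [_ _ ba|z p]; first by rewrite ba e_irr in eab.
move=> /= /andP[/andP[/and3P[aP zP _] not_ab] Rp] _ lastp.
rewrite aP zP (induced_path_all (sub_path R_P Rp)) !andbT.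
by case: p {Rp} lastp => //= ba; rewrite ba !eqxx in not_ab.
Qed.

Lemma cycle_split P (c : seq T) w : is_cycle_in e P c -> w \in c ->
  exists r1 r2, [/\ e w r1 && e w r2, r1 != r2, r1 \in P :\ w, r2 \in P :\ w
                  & connect (induced e (P :\ w)) r1 r2].
Proof.
move=> cP /rot_to[i q def_c].
have : is_cycle_in e P (w :: q).
  move: cP; rewrite -def_c /is_cycle_in size_rot /ucycleb rot_cycle rot_uniq.
  by rewrite (eq_all_r (mem_rot _ _)).
case: q {def_c} => [|r1 q]; first by case/and3P.
case/and3P=> size_q /andP[cyc uq] allq.
move: cyc => /= /andP[ewr1]; rewrite rcons_path => /andP[eq er2w].
case/and3P: uq; rewrite inE negb_or => /andP[wr1 wq] r1q _.
have allPw : all [in P :\ w] (r1 :: q).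
  apply/allP => x xq; rewrite !inE (allP allq) ?andbT; last by rewrite inE xq orbT.
  by apply: contraTneq xq => ->; rewrite inE negb_or wr1.
exists r1, (last r1 q); split.
- by rewrite ewr1 e_sym.
- case: q size_q r1q {eq er2w wq allPw allq} => // x q _ /=.
  by apply: contraNneq => ->; apply: mem_last.
- exact: (allP allPw r1 (mem_head _ _)).
- exact: (allP allPw _ (mem_last _ _)).
- by apply/connectP; exists q => //; apply: path_induced.
Qed.

Lemma mem_cycle_edge (c : seq T) x y : cycle_edge c x y -> x \in c.
Proof. by case/orP => /andP[// yc /eqP->]; rewrite mem_next. Qed.

Lemma unique_cycle_mem P (C c : seq T) :
  unique_cycle_on e P C -> is_cycle_in e P c -> c =i C.
Proof.
move=> [_ uniqC] cP x; have edgeE := uniqC c cP.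
apply/idP/idP => xc.
- by apply: (@mem_cycle_edge _ x (next c x)); rewrite -edgeE /cycle_edge xc eqxx.
- by apply: (@mem_cycle_edge _ x (next C x)); rewrite edgeE /cycle_edge xc eqxx.
Qed.

Definition has_edge X := [exists x in X, exists y in X, e x y].

Definition triangle_free X := {in X & &, forall x y z, e x y -> e y z -> ~~ e x z}.

Lemma has_edgeP X : reflect (exists x y, [/\ x \in X, y \in X & e x y]) (has_edge X).
Proof.
apply: (iffP exists_inP) => [[x xX /exists_inP[y yX exy]] | [x [y [xX yX exy]]]].
  by exists x, y.
by exists x => //; apply/exists_inP; exists y.
Qed.

Lemma hasNedge_independent X : ~~ has_edge X -> independent e X.
Proof.
by move=> noedge x y xX yX; apply: contra noedge => exy; apply/has_edgeP; exists x, y.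
Qed.

Lemma has_edge_sub X Y : X \subset Y -> has_edge X -> has_edge Y.
Proof.
move=> /subsetP XY /has_edgeP[x [y [/XY xY /XY yY exy]]].
by apply/has_edgeP; exists x, y.
Qed.

Lemma has_edgeD1 X a b : has_edge (X :\ a) ->
  has_edge (X :\ a :\ b) \/ exists2 z, z \in X :\ a :\ b & e b z.
Proof.
move=> /has_edgeP[x [y [xX yX exy]]].
have [<- | xb] := eqVneq x b.
  by right; exists y; rewrite // in_setD1 yX andbT eq_sym edge_neq.
have [<- | yb] := eqVneq y b.
  by right; exists x; rewrite 1?e_sym // in_setD1 xX andbT edge_neq.
by left; apply/has_edgeP; exists x, y; rewrite in_setD1 xb xX in_setD1 yb yX.
Qed.

Lemma two_disjoint_edges X : triangle_free X -> has_edge X ->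
    {in X, forall x, has_edge (X :\ x)} ->
  exists a b c d, [/\ uniq [:: a; b; c; d], e a b, e c d & {subset [:: a; b; c; d] <= X}].
Proof.
move=> no_triangle /has_edgeP[a [b [aX bX eab]]] dense.
have Xab : X :\ b :\ a = X :\ a :\ b by rewrite !setDDl setUC.
have matching c d : c \in X :\ a :\ b -> d \in X :\ a :\ b -> e c d ->
    exists a b c d, [/\ uniq [:: a; b; c; d], e a b, e c d & {subset [:: a; b; c; d] <= X}].
  rewrite !in_setD1 => /and3P[cb ca cX] /and3P[db da dX] ecd; exists a, b, c, d.
  split=> //; last by move=> x; rewrite !inE => /or4P[] /eqP->.
  rewrite /= !inE !negb_or (edge_neq eab) (edge_neq ecd).
  by rewrite ![a == _]eq_sym ![b == _]eq_sym ca cb da db.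
case: (has_edgeD1 b (dense a aX)) => [/has_edgeP[c [d [cX dX ecd]]] | [z zX ebz]].
  exact: matching ecd.
case: (has_edgeD1 a (dense b bX)) => [/has_edgeP[c [d [cX dX ecd]]] | [z' z'X eaz']].
  by rewrite Xab in cX dX; exact: matching ecd.
rewrite Xab !in_setD1 in z'X; rewrite !in_setD1 in zX.
case/and3P: zX => zb za zX; case/and3P: z'X => z'b z'a z'X.
have zz' : z != z'.
  by apply: contraTneq (no_triangle a b z aX bX zX eab ebz) => ->; rewrite eaz'.
exists a, z', b, z; split=> //; last by move=> x; rewrite !inE => /or4P[] /eqP->.
rewrite /= !inE !negb_or (edge_neq eab) (edge_neq ebz) z'b.
by rewrite ![a == _]eq_sym za z'a (eq_sym z' z) zz'.
Qed.

End InducedCycles.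

(* For disjoint edges ab and cd: [ac] says that a and c are adjacent, [lac] that
   b and d are linked once a and c are deleted, and [oa] that a lies on C. *)
Lemma crossing_choice (ac ad bc bd lac lad lbc lbd oa ob oc od : bool) :
  (ac -> lbd) -> (bd -> lac) -> (ad -> lbc) -> (bc -> lad) ->
  (lac -> lad -> [&& ~~ oa, oc & od]) -> (lac -> lbc -> [&& ~~ oc, oa & ob]) ->
  (lbd -> lad -> [&& ~~ od, oa & ob]) -> (lbd -> lbc -> [&& ~~ ob, oc & od]) ->
  ~~ (ac && bc) -> ~~ (ad && bd) -> ~~ (ac && ad) -> ~~ (bc && bd) ->
  [|| oa, ob, oc | od] ->
  [|| [&& ~~ ac, ~~ lac & oa || oc], [&& ~~ ad, ~~ lad & oa || od],
      [&& ~~ bc, ~~ lbc & ob || oc] | [&& ~~ bd, ~~ lbd & ob || od]].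
Proof.
by case: ac; case: ad; case: bc; case: bd; case: lac; case: lad; case: lbc; case: lbd;
  case: oa; case: ob; case: oc; case: od => //= /(_ isT) // /(_ isT).
Qed.

Section ApexColoring.
Variables (T : finType) (e : rel T) (v : T).
Hypotheses (e_sym : symmetric e) (e_irr : irreflexive e).
Implicit Types (I P X : {set T}).
Local Notation S := [set x : T | x != v].
Local Notation N := [set u : T | e v u].
Local Notation linked X := (connect (induced e (S :\: X))).
Local Notation apex_colorable :=
  (exists I F : {set T}, near_bipartite_coloring e I F /\ I \subset N).

Lemma neighbor_in_S u : u \in N -> u \in S.
Proof. by rewrite !inE eq_sym => /(edge_neq e_irr). Qed.

Lemma coloring_of_neighbor_set I :
    I \subset N -> independent e I -> (forall c, ~~ is_cycle_in e (S :\: I) c) ->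
    {in N :\: I &, forall r1 r2, r1 != r2 -> ~~ linked I r1 r2} ->
  near_bipartite_coloring e I (~: I).
Proof.
move=> IN indI acycI sepI; split; first by rewrite disjoints_subset setCK.
split; first exact: setUCr.
split=> // c; apply/negP => cycI.
have [vc | vNc] := boolP (v \in c); last first.
  move/negP: (acycI c); apply; case/and3P: cycI => size_c ucycle_c /allP cI.
  rewrite /is_cycle_in size_c ucycle_c; apply/allP => x xc.
  by rewrite !inE -in_setC cI //; apply: contraNneq vNc => <-.
have [r1 [r2 [/andP[vr1 vr2] r12 r1I r2I r1r2]]] := cycle_split e_sym cycI vc.
have SI : ~: I :\ v = S :\: I by apply/setP => x; rewrite !inE andbC.
rewrite SI in r1I r2I r1r2.
apply: (negP (sepI r1 r2 _ _ r12) r1r2); rewrite in_setD inE ?vr1 ?vr2 andbT.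
- by case/setDP: r1I.
- by case/setDP: r2I.
Qed.

Section CycleVertices.
(* [C] is the vertex set of the cycle of G' - v, or [setT] if G' - v is a forest. *)
Variable C : {set T}.
Hypothesis cycle_vertices : forall c, is_cycle_in e S c -> c =i C.
Hypothesis C_neighbor : exists2 u, u \in N & u \in C.
Hypothesis N_triangle_free : triangle_free e N.

Lemma acyclic_hitting_cycle I y : y \in I -> y \in C ->
  forall c, ~~ is_cycle_in e (S :\: I) c.
Proof.
move=> yI yC c; apply/negP => cI.
have /(_ y) := cycle_vertices (is_cycle_in_sub (subsetDl S I) cI).
rewrite yC; case/and3P: cI => _ _ /allP cI /cI.
by rewrite inE yI.
Qed.

Lemma detour_in_C P a b y : P \subset S -> e a b ->
    connect (induced e (P :\ b)) a y -> connect (induced e (P :\ a)) y b ->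
  [/\ a \in C, b \in C & C \subset P].
Proof.
move=> PS eab ay yb; have [c cP /andP[ac bc]] := cycle_of_detour e_sym e_irr eab ay yb.
have cE := cycle_vertices (is_cycle_in_sub PS cP).
split; [by rewrite -cE | by rewrite -cE |].
by apply/subsetP => x; rewrite -cE; case/and3P: cP => _ _ /allP; apply.
Qed.

Lemma two_detours_in_C x y s t : e x y ->
  linked [set s; x] t y -> linked [set s; y] t x -> [&& s \notin C, x \in C & y \in C].
Proof.
move=> exy ty tx; rewrite -setDDl in ty; rewrite -setDDl (induced_connect_sym e_sym) in tx.
have [-> -> sub_s] := detour_in_C (subD1set S s) exy tx ty.
rewrite !andbT; apply/negP => sC.
by have := subsetP sub_s s sC; rewrite !inE eqxx.
Qed.

Lemma pair_coloring p q p' q' : {subset N <= [:: p; q; p'; q']} ->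
    p \in N -> q \in N -> ~~ e p q -> (p \in C) || (q \in C) ->
    ~~ linked [set p; q] p' q' ->
  apex_colorable.
Proof.
move=> Ncover pN qN npq Cpq sep; exists [set p; q], (~: [set p; q]).
have IN : [set p; q] \subset N by apply/subsetP => x /set2P[]->.
split=> //; apply: coloring_of_neighbor_set => //.
- by move=> x y /set2P[]-> /set2P[]->; rewrite ?e_irr // e_sym.
- case/orP: Cpq => [Cp | Cq].
  + by apply: (acyclic_hitting_cycle _ Cp); rewrite !inE eqxx.
  + by apply: (acyclic_hitting_cycle _ Cq); rewrite !inE eqxx orbT.
- move=> r1 r2 /setDP[/Ncover r1N r1I] /setDP[/Ncover r2N r2I].
  move: r1N r2N r1I r2I; rewrite !inE.
  by do 2!case/or4P=> /eqP->; rewrite ?eqxx ?orbT // => _ _ _;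
    rewrite // (induced_connect_sym e_sym).
Qed.

Lemma one_deletion_coloring x : ~~ has_edge e (N :\ x) -> apex_colorable.
Proof.
move=> indep.
have [/exists_inP[y yNx yC] | /exists_inPn noC] := boolP [exists y in N :\ x, y \in C].
  exists (N :\ x), (~: (N :\ x)); split; last exact: subD1set.
  apply: coloring_of_neighbor_set; [exact: subD1set | exact: hasNedge_independent |
    exact: acyclic_hitting_cycle yNx yC | ].
  move=> r1 r2; rewrite !inE => /andP[+ r1N] /andP[+ r2N].
  by rewrite r1N r2N !andbT !negbK => /eqP-> /eqP->; rewrite eqxx.
have [u uN uC] := C_neighbor.
have [ux | ux] := eqVneq u x; last by have := noC u; rewrite in_setD1 ux uN uC => /(_ isT).
subst u; pose I := [set y in N | ~~ e x y].
have xI : x \in I by rewrite /I inE uN e_irr.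
have IN : I \subset N by apply/subsetP => y; rewrite /I inE => /andP[].
exists I, (~: I); split=> //; apply: coloring_of_neighbor_set => //.
- move=> y z; rewrite /I !inE => /andP[yN xy] /andP[zN xz].
  have [-> | yx] := eqVneq y x; first exact: xz.
  have [-> | zx] := eqVneq z x; first by rewrite e_sym.
  by apply: (hasNedge_independent indep); rewrite in_setD1 ?yx ?zx inE.
- exact: acyclic_hitting_cycle xI uC.
have adj_x r : r \in N :\: I -> e x r by case/setDP => rN; rewrite /I inE rN negbK.
move=> r1 r2 r1NI r2NI r12; apply/negP => link.
have [xr1 xr2] := (adj_x _ r1NI, adj_x _ r2NI).
have r1N : r1 \in N by case/setDP: r1NI.
have r2S : r2 \in S by apply: neighbor_in_S; case/setDP: r2NI.
have SIx : S :\: I \subset S :\ x by rewrite setDS // sub1set.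
have r2x : connect (induced e (S :\ r1)) r2 x.
  apply: connect1; rewrite /induced !in_setD1 r2S (neighbor_in_S uN) e_sym xr2.
  by rewrite (eq_sym r2) r12 (edge_neq e_irr xr1).
have r1x : e r1 x by rewrite e_sym.
have [r1C _ _] := detour_in_C (subxx S) r1x (connect_induced_sub SIx link) r2x.
by have := noC r1; rewrite in_setD1 r1C r1N eq_sym (edge_neq e_irr xr1) => /(_ isT).
Qed.

Lemma matching_crossing a b c d : {subset [:: a; b; c; d] <= N} -> uniq [:: a; b; c; d] ->
    e a b -> e c d -> has [in C] [:: a; b; c; d] ->
  [|| [&& ~~ e a c, ~~ linked [set a; c] b d & (a \in C) || (c \in C)],
      [&& ~~ e a d, ~~ linked [set a; d] b c & (a \in C) || (d \in C)],
      [&& ~~ e b c, ~~ linked [set b; c] a d & (b \in C) || (c \in C)]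
    | [&& ~~ e b d, ~~ linked [set b; d] a c & (b \in C) || (d \in C)]].
Proof.
move=> Nsub uniq_abcd eab ecd hasC.
have [aN bN cN dN] : [/\ a \in N, b \in N, c \in N & d \in N].
  by split; apply: Nsub; rewrite !inE eqxx ?orbT.
move: uniq_abcd; rewrite /= !inE !negb_or => /and4P[/and3P[ab ac ad] /andP[bc bd] cd _].
have inSD w1 w2 y : y \in N -> y != w1 -> y != w2 -> y \in S :\: [set w1; w2].
  by move=> yN y1 y2; rewrite in_setD in_set2 negb_or y1 y2 neighbor_in_S.
have flip s x y t : linked [set s; x] t y = linked [set x; s] y t.
  by rewrite setUC (induced_connect_sym e_sym).
have tri x y z : x \in N -> y \in N -> z \in N -> e x y -> e y z -> e x z -> False.
  by move=> xN yN zN exy eyz; apply/negP: (N_triangle_free xN yN zN exy eyz).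
apply: crossing_choice.
1-4: by move=> exy; apply: connect1; rewrite /induced exy !inSD // eq_sym.
- exact: two_detours_in_C ecd.
- by move=> l1 l2; apply: (two_detours_in_C (t := d) eab); rewrite flip.
- by move=> l1 l2; apply: (two_detours_in_C (t := c) eab); rewrite flip.
- by move=> l1 l2; exact: two_detours_in_C ecd l2 l1.
- by apply/andP => -[eac ebc]; apply: (tri a b c).
- by apply/andP => -[ead ebd]; apply: (tri a b d).
- by apply/andP => -[eac ead]; apply: (tri a c d).
- by apply/andP => -[ebc ebd]; apply: (tri b c d).
- by move: hasC; rewrite /= orbF.
Qed.

Lemma matching_coloring a b c d :
    {subset N <= [:: a; b; c; d]} -> {subset [:: a; b; c; d] <= N} ->
    uniq [:: a; b; c; d] -> e a b -> e c d -> has [in C] [:: a; b; c; d] ->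
  apex_colorable.
Proof.
move=> Ncover Nsub uniq_abcd eab ecd hasC.
have [aN bN cN dN] : [/\ a \in N, b \in N, c \in N & d \in N].
  by split; apply: Nsub; rewrite !inE eqxx ?orbT.
case/or4P: (matching_crossing Nsub uniq_abcd eab ecd hasC) => /and3P[nadj nlink hit];
  apply: (pair_coloring _ _ _ nadj hit nlink) => //.
all: by move=> y /Ncover; rewrite !inE => /or4P[] ->; rewrite ?orbT.
Qed.

Lemma apex_coloring : #|N| <= 4 -> apex_colorable.
Proof.
move=> smallN.
have [/existsP[x indep] | /existsPn dense] := boolP [exists x, ~~ has_edge e (N :\ x)].
  exact: one_deletion_coloring indep.
have [a [b [c [d [uniq_abcd eab ecd sub]]]]] := two_disjoint_edges e_sym e_irr N_triangle_free
  (has_edge_sub (subD1set N v) (negbNE (dense v))) (fun x _ => negbNE (dense x)).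
have [_ Nsub] : (size [:: a; b; c; d] = size (enum N)) * ([:: a; b; c; d] =i enum N).
  by apply: uniq_min_size => [//|y /sub|]; rewrite ?mem_enum // -cardE.
have [u uN uC] := C_neighbor.
apply: (matching_coloring _ sub uniq_abcd eab ecd).
  by move=> y; rewrite Nsub mem_enum.
by apply/hasP; exists u; rewrite // Nsub mem_enum.
Qed.

End CycleVertices.

Lemma tree_apex_coloring : forest_on e S -> #|N| <= 4 -> apex_colorable.
Proof.
move=> forest smallN.
case: (set_0Vmem N) => [N0 | [u uN]].
  exists set0, (~: set0); split; last exact: sub0set.
  apply: coloring_of_neighbor_set; rewrite ?sub0set //.
  - by move=> x y; rewrite in_set0.
  - by move=> c; rewrite setD0; exact: forest.
  - by rewrite N0 setD0 => x; rewrite in_set0.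
apply: (apex_coloring (C := setT)) => //.
- by move=> c cS; have := forest c; rewrite cS.
- by exists u; rewrite ?in_setT.
move=> x y z xN yN zN exy eyz; apply/negP => exz.
by move/negP: (forest [:: x; y; z]); apply; apply: triangle_is_cycle; rewrite ?neighbor_in_S.
Qed.

Lemma unicyclic_apex_coloring (C : seq T) u : unique_cycle_on e S C -> size C != 3 ->
  e v u -> u \in C -> #|N| <= 4 -> apex_colorable.
Proof.
move=> uniqueC sizeC vu uC smallN.
have cycle_vertices c : is_cycle_in e S c -> c =i [set x in C].
  by move=> cS x; rewrite inE (unique_cycle_mem uniqueC cS).
apply: (apex_coloring cycle_vertices) => //; first by exists u; rewrite inE.
move=> x y z xN yN zN exy eyz; apply/negP => exz.
have triangle := triangle_is_cycle e_sym e_irr (neighbor_in_S xN) (neighbor_in_S yN)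
  (neighbor_in_S zN) exy eyz exz.
case: uniqueC => /and3P[size_C /andP[_ uniq_C] _] _.
move/negP: sizeC; apply; rewrite eqn_leq size_C andbT.
apply: (@uniq_leq_size _ C [:: x; y; z] uniq_C) => w.
by rewrite (cycle_vertices _ triangle) inE.
Qed.

End ApexColoring.

Theorem lemma4p36 (T : finType) (e : rel T) (v : T)
    (e_sym : symmetric e) (e_irr : irreflexive e) :
  (tree_on e [set x | x != v] \/
   (connected_on e [set x | x != v] /\
    exists c : seq T, unique_cycle_on e [set x | x != v] c /\ size c != 3 /\
                      exists u, e v u && (u \in c))) ->
  #|[set u | e v u]| <= 4 ->
  exists I F : {set T},
    near_bipartite_coloring e I F /\ I \subset [set u | e v u].
Proof.
case=> [[_ forest] | [_ [C [uniqueC [sizeC [u /andP[vu uC]]]]]]].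
- exact: tree_apex_coloring.
- exact: unicyclic_apex_coloring uniqueC sizeC vu uC.
Qed.
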